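(* Assume CH. Let $\mathcal{I}$ be a $\sigma$-ideal on $\mathbb{R}$ satisfying the standing assumptions, and let $n\geq 1$ be an integer. Then there exists an $\mathcal{I}$-Luzin set $L\subseteq\mathbb{R}$ such that the $n$-fold Minkowski sum $\bigoplus^{n}L=\underbrace{L+\cdots+L}_{n}$ is an $\mathcal{I}$-Luzin set and $\bigoplus^{n+1}L=\mathbb{R}$.
   Context: Standing assumptions on $\mathcal{I}$: $\mathcal{I}$ is a $\sigma$-ideal of subsets of $\mathbb{R}$ such that $\mathbb{R}\notin\mathcal{I}$; $x+I\in\mathcal{I}$ and $xI\in\mathcal{I}$ for all $x\in\mathbb{R}$, $I\in\mathcal{I}$; every member of $\mathcal{I}$ is contained in a Borel member of $\mathcal{I}$; and for all Borel $A,B\notin\mathcal{I}$ the set $A-B$ has nonempty interior. A set $L\subseteq\mathbb{R}$ is $\mathcal{I}$-Luzin if $|L|=\mathfrak{c}$ and $L\cap I$ is countable for every $I\in\mathcal{I}$. Minkowski sum: $A+B=\{a+b:a\in A,b\in B\}$. *)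

From Stdlib Require Import Reals.
Open Scope R_scope.

Definition subset (A B : R -> Prop) : Prop := forall x, A x -> B x.

Inductive borel : (R -> Prop) -> Prop :=
  | borel_open : forall A, open_set A -> borel A
  | borel_compl : forall A, borel A -> borel (fun x => ~ A x)
  | borel_cunion : forall f : nat -> R -> Prop,
      (forall n, borel (f n)) -> borel (fun x => exists n, f n x).

(* countable = injects into nat (includes finite and empty) *)
Definition countable (S : R -> Prop) : Prop :=
  exists f : R -> nat, forall x y, S x -> S y -> f x = f y -> x = y.

Definition card_continuum (S : R -> Prop) : Prop :=
  exists f : R -> R, (forall x, S (f x)) /\
    (forall x y, f x = f y -> x = y) /\
    (forall y, S y -> exists x, f x = y).

Definition CH : Prop :=
  forall S : R -> Prop, countable S \/ card_continuum S.

Definition sigma_ideal (I : (R -> Prop) -> Prop) : Prop :=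
  I (fun _ => False) /\
  (forall A B, subset A B -> I B -> I A) /\
  (forall f : nat -> R -> Prop, (forall n, I (f n)) -> I (fun x => exists n, f n x)).

Definition translate (x : R) (A : R -> Prop) : R -> Prop :=
  fun z => exists y, A y /\ z = x + y.
Definition dilate (x : R) (A : R -> Prop) : R -> Prop :=
  fun z => exists y, A y /\ z = x * y.

Definition minkowski (A B : R -> Prop) : R -> Prop :=
  fun z => exists a b, A a /\ B b /\ z = a + b.
Definition difference (A B : R -> Prop) : R -> Prop :=
  fun z => exists a b, A a /\ B b /\ z = a - b.

Definition nonempty_interior (A : R -> Prop) : Prop :=
  exists a b, a < b /\ forall z, a < z < b -> A z.

Definition standing_assumptions (I : (R -> Prop) -> Prop) : Prop :=
  sigma_ideal I /\
  ~ I (fun _ => True) /\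
  (forall x A, I A -> I (translate x A)) /\
  (forall x A, I A -> I (dilate x A)) /\
  (forall A, I A -> exists B, borel B /\ I B /\ subset A B) /\
  (forall A B, borel A -> borel B -> ~ I A -> ~ I B ->
     nonempty_interior (difference A B)).

Definition luzin (I : (R -> Prop) -> Prop) (L : R -> Prop) : Prop :=
  card_continuum L /\ forall A, I A -> countable (fun x => L x /\ A x).

(* n-fold Minkowski sum: nsum 0 L = {0}, nsum (m+1) L = nsum m L + L,
   so nsum n L = L + ... + L (n times) for n >= 1. *)
Fixpoint nsum (n : nat) (L : R -> Prop) : R -> Prop :=
  match n with
  | O => fun z => z = 0
  | S m => minkowski (nsum m L) L
  end.

(* Under CH, enumerate R in order type omega_1 and, through codes of Borel sets,
   enumerate along the same order a family of null sets cofinal in the ideal.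
   By transfinite recursion choose at stage x a point y_x and put both y_x and
   x - n y_x into L; then x = n y_x + (x - n y_x) lies in the (n+1)-fold sum.
   The point y_x avoids every y for which some j y + k (x - n y) + t, with
   1 <= j + k <= n and t a sum of earlier points, lies in a null set coded before
   x: as j - k n <> 0 these y form a countable union of affine preimages of null
   sets.  Consequently a sum of at most n points of L that lies in the null set
   coded at stage r only uses points of stages up to r, so it ranges over a
   countable set; this makes L and its n-fold sum Luzin. *)

From mathcomp Require Import ssreflect ssrbool eqtype boolp wochoice.
From Stdlib Require Import Reals Lra Lia Classical ClassicalEpsilon
  FunctionalExtensionality PropExtensionality Cantor Inverse_Image ZArith.
Open Scope R_scope.

Lemma countable_subset (A B : R -> Prop) : subset A B -> countable B -> countable A.
Proof. intros HAB [f Hf]; exists f; auto. Qed.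

Lemma countable_singleton (a : R) : countable (fun x => x = a).
Proof. exists (fun _ => O); intros x y -> -> _; reflexivity. Qed.

Lemma countable_union (A B : R -> Prop) :
  countable A -> countable B -> countable (fun x => A x \/ B x).
Proof.
  intros [f Hf] [g Hg].
  exists (fun x => if excluded_middle_informative (A x) then (2 * f x)%nat
                   else S (2 * g x)).
  intros x y Hx Hy.
  destruct (excluded_middle_informative (A x)) as [Ax|Ax],
           (excluded_middle_informative (A y)) as [Ay|Ay];
    intros E; simpl in E; try lia.
  - apply Hf; auto; lia.
  - apply Hg; [tauto | tauto | lia].
Qed.

Lemma countable_image2 (f : R -> R -> R) (A B : R -> Prop) :
  countable A -> countable B -> countable (fun z => exists a b, A a /\ B b /\ z = f a b).
Proof.
  intros [fa Ha] [fb Hb].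
  set (S := fun z => exists a b, A a /\ B b /\ z = f a b).
  assert (pre : forall z, {p : R * R | S z -> A (fst p) /\ B (snd p) /\ z = f (fst p) (snd p)}).
  { intros z. apply constructive_indefinite_description.
    destruct (classic (S z)) as [[a [b H]] | H].
    - exists (a, b); auto.
    - exists (0, 0); tauto. }
  exists (fun z => to_nat (fa (fst (proj1_sig (pre z))), fb (snd (proj1_sig (pre z))))).
  intros x y Hx Hy E.
  destruct (pre x) as [[a b] Hab], (pre y) as [[c d] Hcd]; cbn [proj1_sig fst snd] in E.
  destruct (Hab Hx) as [Ha' [Hb' ->]], (Hcd Hy) as [Hc' [Hd' ->]].
  apply (f_equal of_nat) in E; rewrite !cancel_of_to in E; injection E as E1 E2.
  f_equal; [exact (Ha _ _ Ha' Hc' E1) | exact (Hb _ _ Hb' Hd' E2)].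
Qed.

Lemma countable_image (f : R -> R) (A : R -> Prop) :
  countable A -> countable (fun z => exists a, A a /\ z = f a).
Proof.
  intros HA.
  apply (countable_subset _ (fun z => exists a b, A a /\ b = 0 /\ z = f a)).
  - intros z [a [Ha ->]]. exists a, 0. auto.
  - exact (countable_image2 (fun a _ => f a) A _ HA (countable_singleton 0)).
Qed.

Lemma countable_minkowski (A B : R -> Prop) :
  countable A -> countable B -> countable (minkowski A B).
Proof. exact (countable_image2 Rplus A B). Qed.

Lemma countable_nsum (A : R -> Prop) (m : nat) : countable A -> countable (nsum m A).
Proof.
  intros HA. induction m as [|m IH].
  - apply countable_singleton.
  - apply countable_minkowski; assumption.
Qed.

Lemma nsum_mono (A B : R -> Prop) (m : nat) : subset A B -> subset (nsum m A) (nsum m B).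
Proof.
  intros HAB. induction m as [|m IH]; intros s Hs; [exact Hs|].
  destruct Hs as [a [b [Ha [Hb ->]]]]. exists a, b. auto.
Qed.

Lemma nsum_one (A : R -> Prop) (x : R) : A x -> nsum 1 A x.
Proof. intros Hx. exists 0, x. repeat split; auto; ring. Qed.

Lemma nsum_scale (A : R -> Prop) (m : nat) (y : R) : A y -> nsum m A (INR m * y).
Proof.
  intros Hy. induction m as [|m IH].
  - simpl; ring.
  - exists (INR m * y), y. repeat split; auto. rewrite S_INR; ring.
Qed.

Lemma countable_of_countable_nsum (A : R -> Prop) (m : nat) (a : R) :
  A a -> countable (nsum (S m) A) -> countable A.
Proof.
  intros Ha [f Hf].
  exists (fun v => f (INR m * a + v)). intros v v' Hv Hv' E.
  assert (INR m * a + v = INR m * a + v') by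
    (apply Hf; auto; eexists _, _; repeat split; eauto using nsum_scale).
  lra.
Qed.

Lemma nsum_split_pair (A : R -> Prop) (y z : R) (m : nat) (s : R) :
  nsum m (fun w => A w \/ w = y \/ w = z) s ->
  nsum m A s \/ exists j k t, (1 <= j + k <= m)%nat /\ nsum (m - j - k) A t /\
     s = INR j * y + INR k * z + t.
Proof.
  revert s; induction m as [|m IH]; intros s Hs; [now left|].
  destruct Hs as [s' [w [Hs' [Hw ->]]]].
  destruct (IH s' Hs') as [Hs'A | [j [k [t [Hjk [Ht ->]]]]]];
    destruct Hw as [Hw | [-> | ->]]; [left; now exists s', w | right .. ].
  - exists 1%nat, O, s'. replace (S m - 1 - 0)%nat with m by lia.
    split; [lia|]. simpl; split; [auto | ring].
  - exists O, 1%nat, s'. replace (S m - 0 - 1)%nat with m by lia.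
    split; [lia|]. simpl; split; [auto | ring].
  - exists j, k, (t + w). replace (S m - j - k)%nat with (S (m - j - k)) by lia.
    split; [lia|]. split; [now exists t, w | ring].
  - exists (S j), k, t. replace (S m - S j - k)%nat with (m - j - k)%nat by lia.
    split; [lia|]. split; [auto | rewrite S_INR; ring].
  - exists j, (S k), t. replace (S m - j - S k)%nat with (m - j - k)%nat by lia.
    split; [lia|]. split; [auto | rewrite S_INR; ring].
Qed.

Lemma open_neq (a : R) : open_set (fun x => x <> a).
Proof.
  intros x Hx.
  assert (Hd : 0 < Rabs (x - a)) by (apply Rabs_pos_lt; lra).
  exists (mkposreal _ Hd). intros y Hy ->. unfold disc in Hy; simpl in Hy.
  rewrite Rabs_minus_sym in Hy. lra.
Qed.

Section Ideal.
Variable I : (R -> Prop) -> Prop.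
Hypothesis HI : standing_assumptions I.

Lemma I_subset (A B : R -> Prop) : subset A B -> I B -> I A.
Proof. destruct HI as [[_ [Hsub _]] _]. apply Hsub. Qed.

Lemma I_empty (A : R -> Prop) : (forall x, ~ A x) -> I A.
Proof.
  destruct HI as [[H0 _] _]. intros HA.
  apply (I_subset _ (fun _ => False)); [exact HA | exact H0].
Qed.

Lemma I_bigcup_nat (F : nat -> R -> Prop) : (forall k, I (F k)) -> I (fun x => exists k, F k x).
Proof. destruct HI as [[_ [_ Hcup]] _]. apply Hcup. Qed.

Lemma I_bigcup (P : R -> Prop) (F : R -> R -> Prop) :
  countable P -> (forall r, P r -> I (F r)) -> I (fun z => exists r, P r /\ F r z).
Proof.
  intros [f Hf] HF.
  apply (I_subset _ (fun z => exists k, exists r, P r /\ f r = k /\ F r z)).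
  { intros z [r [Pr Fr]]. exists (f r), r. auto. }
  apply I_bigcup_nat. intros k.
  destruct (classic (exists r, P r /\ f r = k)) as [[r [Pr <-]] | Hk].
  - apply (I_subset _ (F r)); [|auto].
    intros z [r' [Pr' [E Fr']]]. now rewrite (Hf _ _ Pr' Pr E) in Fr'.
  - apply I_empty. intros z [r [Pr [E _]]]. eauto.
Qed.

Lemma I_singleton (a : R) : I (fun x => x = a).
Proof.
  set (S := fun x => ~ x <> a).
  assert (HS : borel S) by apply borel_compl, borel_open, open_neq.
  apply (I_subset _ S); [now intros x -> |].
  apply NNPP; intros HnS.
  destruct HI as (_ & _ & _ & _ & _ & Hdiff).
  destruct (Hdiff S S HS HS HnS HnS) as [b0 [b1 [Hb Hint]]].
  (* the difference set S - S is just {0} *)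
  destruct (Hint ((2 * b0 + b1) / 3)) as [u [v [Hu [Hv E1]]]]; [lra|].
  destruct (Hint ((b0 + 2 * b1) / 3)) as [u' [v' [Hu' [Hv' E2]]]]; [lra|].
  apply NNPP in Hu, Hv, Hu', Hv'. subst. lra.
Qed.

Lemma I_countable (A : R -> Prop) : countable A -> I A.
Proof.
  intros HA. apply (I_subset _ (fun z => exists r, A r /\ z = r)).
  - intros z Hz. eauto.
  - apply I_bigcup; [exact HA | intros r _; apply I_singleton].
Qed.

Lemma R_uncountable : ~ countable (fun _ => True).
Proof. destruct HI as (_ & HR & _). intros H. apply HR. now apply I_countable. Qed.

Lemma I_affine_preimage (a d : R) (B : R -> Prop) :
  a <> 0 -> I B -> I (fun y => B (a * y + d)).
Proof.
  destruct HI as (_ & _ & Htransl & Hdil & _).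
  intros Ha HB. apply (I_subset _ (dilate (/ a) (translate (- d) B))).
  - intros y Hy. exists (a * y). split.
    + exists (a * y + d). split; [exact Hy | ring].
    + field; exact Ha.
  - apply Hdil, Htransl, HB.
Qed.

End Ideal.

Definition Code := nat -> bool.

Definition child (t : Code) (k : nat) : Code := fun i => t (S (S (to_nat (k, i)))).

(* [i] encodes a triple [((a, b), m)]; the set is the interval of radius [1/m]
   around [(a - b)/m] (all of [R] or empty when [m = 0]). *)
Definition basic (i : nat) (x : R) : Prop :=
  let (p, m) := of_nat i in let (a, b) := of_nat p in
  Rabs (INR m * x - (INR a - INR b)) < 1.

Inductive codes : Code -> (R -> Prop) -> Prop :=
  | codes_open t : t O = false ->
      codes t (fun x => exists i, t (S i) = true /\ basic i x)
  | codes_compl t A : t O = true -> t 1%nat = false -> codes (child t O) A ->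
      codes t (fun x => ~ A x)
  | codes_union t (F : nat -> R -> Prop) : t O = true -> t 1%nat = true ->
      (forall k, codes (child t k) (F k)) -> codes t (fun x => exists k, F k x).

Lemma codes_functional (t : Code) (A B : R -> Prop) : codes t A -> codes t B -> A = B.
Proof.
  intros HA; revert B.
  induction HA as [t H0 | t A H0 H1 HA IH | t F H0 H1 HF IH];
    intros B HB; inversion HB; subst; try congruence.
  - match goal with H : codes (child t O) _ |- _ => now rewrite (IH _ H) end.
  - replace F with F0; [reflexivity|].
    apply functional_extensionality; intros k. symmetry. now apply IH.
Qed.

Lemma IZR_as_INR_diff (z : Z) : exists a b, IZR z = INR a - INR b.
Proof.
  exists (Z.to_nat z), (Z.to_nat (- z)).
  rewrite !INR_IZR_INZ -minus_IZR. f_equal. lia.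
Qed.

Lemma basic_approx (x delta : R) :
  0 < delta -> exists i, basic i x /\ forall y, basic i y -> Rabs (y - x) < delta.
Proof.
  intros Hd.
  destruct (archimed_cor1 (delta / 2)) as [m [Hm Hm0]]; [lra|].
  assert (HM : 0 < INR m) by now apply lt_0_INR.
  set (z := (up (INR m * x) - 1)%Z).
  destruct (IZR_as_INR_diff z) as [a [b Hab]].
  assert (Hx : Rabs (INR m * x - IZR z) < 1).
  { destruct (archimed (INR m * x)) as [H1 H2]. unfold z; rewrite minus_IZR.
    apply Rabs_def1; lra. }
  exists (to_nat (to_nat (a, b), m)).
  unfold basic; rewrite cancel_of_to; cbv iota beta; rewrite cancel_of_to; cbv iota beta.
  rewrite <- Hab. split; [exact Hx|].
  intros y Hy.
  assert (Hyx : Rabs (INR m * (y - x)) < 2).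
  { replace (INR m * (y - x)) with ((INR m * y - IZR z) - (INR m * x - IZR z)) by ring.
    eapply Rle_lt_trans; [apply Rabs_triang|]. rewrite Rabs_Ropp. lra. }
  rewrite Rabs_mult (Rabs_right (INR m)) in Hyx; [|lra].
  assert (E : INR m * / INR m = 1) by (field; lra).
  nra.
Qed.

Lemma open_coded (A : R -> Prop) : open_set A -> exists t, codes t A.
Proof.
  intros HA.
  set (t := fun p => match p with
                     | O => false
                     | S i => if excluded_middle_informative (subset (basic i) A)
                              then true else false
                     end).
  exists t.
  enough (E : A = fun x => exists i, t (S i) = true /\ basic i x)
    by (rewrite E; now apply codes_open).
  apply functional_extensionality; intros x; apply propositional_extensionality; split.
  - intros Hx. destruct (HA x Hx) as [[d Hd] Hdisc]; simpl in Hdisc.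
    destruct (basic_approx x d Hd) as [i [Hi Hiy]]. exists i. split; [|exact Hi].
    unfold t. destruct excluded_middle_informative as [|Hno]; [reflexivity|].
    exfalso; apply Hno. intros y Hy. apply Hdisc. now apply Hiy.
  - intros [i [Hi Hx]]. unfold t in Hi.
    destruct excluded_middle_informative as [Hsub|]; [now apply Hsub | discriminate].
Qed.

Lemma borel_coded (A : R -> Prop) : borel A -> exists t, codes t A.
Proof.
  induction 1 as [A HA | A HA [t Ht] | F HF IH].
  - now apply open_coded.
  - exists (fun p => match p with
                     | O => true
                     | 1%nat => false
                     | S (S q) => t (snd (of_nat q))
                     end).
    apply codes_compl; try reflexivity.
    replace (child _ O) with t; [exact Ht|].
    apply functional_extensionality; intros i. unfold child. now rewrite cancel_of_to.
  - destruct (choice (fun k t => codes t (F k)) IH) as [g Hg].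
    exists (fun p => match p with
                     | O | 1%nat => true
                     | S (S q) => g (fst (of_nat q)) (snd (of_nat q))
                     end).
    apply codes_union; try reflexivity. intros k.
    replace (child _ k) with (g k); [apply Hg|].
    apply functional_extensionality; intros i. unfold child. now rewrite cancel_of_to.
Qed.

Fixpoint cantor_psum (b : nat -> bool) (N : nat) : R :=
  match N with
  | O => 0
  | S N' => cantor_psum b N' + (if b N' then 2 / 3 ^ S N' else 0)
  end.

Lemma cantor_psum_tail (b : nat -> bool) (N M : nat) : (N <= M)%nat ->
  cantor_psum b N <= cantor_psum b M <= cantor_psum b N + / 3 ^ N - / 3 ^ M.
Proof.
  induction 1 as [|M HNM IH]; [lra|].
  assert (H3 : 0 < 3 ^ M) by (apply pow_lt; lra).
  assert (E : 2 / 3 ^ S M = / 3 ^ M - / 3 ^ S M) by (simpl; field; lra).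
  assert (0 < 2 / 3 ^ S M) by (simpl; apply Rdiv_lt_0_compat; lra).
  change (cantor_psum b (S M)) with
    (cantor_psum b M + (if b M then 2 / 3 ^ S M else 0)).
  destruct (b M); lra.
Qed.

Lemma cantor_psum_agree (b b' : nat -> bool) (N : nat) :
  (forall m, (m < N)%nat -> b m = b' m) -> cantor_psum b N = cantor_psum b' N.
Proof.
  induction N as [|N IH]; intros Hbb'; [reflexivity|]. simpl.
  rewrite IH; [|intros m Hm; apply Hbb'; lia]. rewrite (Hbb' N); [reflexivity | lia].
Qed.

Lemma cantor_psum_bound (b : nat -> bool) (N M : nat) :
  cantor_psum b M <= cantor_psum b N + / 3 ^ N.
Proof.
  assert (Hpos : forall K, 0 < / 3 ^ K) by (intros K; apply Rinv_0_lt_compat, pow_lt; lra).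
  destruct (Nat.le_ge_cases N M) as [H | H];
    pose proof (cantor_psum_tail b _ _ H); pose proof (Hpos N); pose proof (Hpos M); lra.
Qed.

(* The real with ternary digits [2 b_0, 2 b_1, ...]: the supremum of the partial sums. *)
Definition cantor_point (b : nat -> bool) : R.
Proof.
  refine (proj1_sig (completeness (fun r => exists N, r = cantor_psum b N) _ _)).
  - exists (cantor_psum b O + / 3 ^ O). intros r [N ->]. apply cantor_psum_bound.
  - exists 0, O. reflexivity.
Defined.

Lemma cantor_point_bounds (b : nat -> bool) (N : nat) :
  cantor_psum b N <= cantor_point b <= cantor_psum b N + / 3 ^ N.
Proof.
  unfold cantor_point. destruct completeness as [c [Hub Hlub]]; simpl. split.
  - apply Hub. now exists N.
  - apply Hlub. intros r [M ->]. apply cantor_psum_bound.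
Qed.

Lemma cantor_point_digit (b b' : nat -> bool) (k : nat) :
  cantor_psum b k = cantor_psum b' k -> cantor_point b = cantor_point b' -> b k = b' k.
Proof.
  intros Hk E.
  assert (Hw : 0 < / 3 ^ S k) by (apply Rinv_0_lt_compat, pow_lt; lra).
  assert (E2 : 2 / 3 ^ S k = 2 * / 3 ^ S k) by reflexivity.
  pose proof (cantor_point_bounds b (S k)) as Hb.
  pose proof (cantor_point_bounds b' (S k)) as Hb'.
  change (cantor_psum ?c (S k)) with
    (cantor_psum c k + (if c k then 2 / 3 ^ S k else 0)) in Hb, Hb'.
  rewrite Hk E2 in Hb. rewrite E2 in Hb'.
  destruct (b k), (b' k); lra.
Qed.

Lemma cantor_point_inj (b b' : nat -> bool) : cantor_point b = cantor_point b' -> b = b'.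
Proof.
  intros E.
  assert (Hagree : forall k m, (m < k)%nat -> b m = b' m).
  { induction k as [|k IH]; intros m Hm; [lia|].
    destruct (Nat.lt_ge_cases m k) as [Hmk | Hmk]; [now apply IH|].
    replace m with k by lia. apply cantor_point_digit; [|exact E].
    now apply cantor_psum_agree. }
  apply functional_extensionality; intros k. apply (Hagree (S k)). lia.
Qed.

Lemma R_least_order : exists le : R -> R -> Prop,
  (forall P : R -> Prop, (exists x, P x) -> exists z, P z /\ forall y, P y -> le z y) /\
  (forall x y, le x y -> le y x -> x = y).
Proof.
  have [le le_wo] := well_ordering_principle {classic R}.
  have least (P : R -> Prop) : (exists x, P x) ->
      exists! z, P z /\ forall y, P y -> le z y.
    move=> [x Px]; have [|z [[Pz Hz] Hu]] := le_wo (fun w => `[< P w >]).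
      by exists x; apply/asboolP.
    exists z; split; first by split; [apply/asboolP | move=> y Py; apply: Hz; apply/asboolP].
    move=> z' [Pz' Hz']; apply: Hu; split; first by apply/asboolP.
    by move=> y /asboolP; apply: Hz'.
  exists (fun x y => le x y); split.
    by move=> P /least [z [Hz _]]; exists z.
  move=> x y Hxy Hyx.
  have refl (w : R) : le w w.
    have [z [[-> Hz] _]] := least (fun v => v = w) (ex_intro _ w (Logic.eq_refl w)).
    exact: Hz.
  have [z [_ Hu]] := least (fun v => v = x \/ v = y) (ex_intro _ x (or_introl (Logic.eq_refl x))).
  have Ex : z = x by apply: Hu; split; [left | move=> w [->|->]].
  have Ey : z = y by apply: Hu; split; [right | move=> w [->|->]].
  by rewrite -Ex -Ey.
Qed.

Lemma wf_minimal (prec : R -> R -> Prop) (P : R -> Prop) :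
  well_founded prec -> (exists x, P x) -> exists x, P x /\ forall y, prec y x -> ~ P y.
Proof.
  intros Hwf [x Px]. apply NNPP; intros Hno. revert Px.
  induction x as [x IH] using (well_founded_induction Hwf).
  intros Px. apply Hno. exists x. split; [exact Px|]. intros y Hy Py. exact (IH y Hy Py).
Qed.

Lemma R_well_order : exists prec : R -> R -> Prop, well_founded prec /\
  (forall x y, prec x y \/ x = y \/ prec y x) /\
  (forall x y z, prec x y -> prec y z -> prec x z).
Proof.
  destruct R_least_order as [le [Hleast Hanti]].
  assert (Htot : forall x y, le x y \/ le y x).
  { intros x y. destruct (Hleast (fun z => z = x \/ z = y)) as [z [[-> | ->] Hz]]; eauto. }
  assert (Hrefl : forall x, le x x) by (intros x; destruct (Htot x x); assumption).
  exists (fun x y => le x y /\ x <> y). split; [|split].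
  - intros x. apply NNPP; intros Hx.
    destruct (Hleast (fun y => ~ Acc (fun x y => le x y /\ x <> y) y)) as [z [Hz Hmin]]; [eauto|].
    apply Hz. constructor. intros y [Hyz Hne]. apply NNPP; intros Hy.
    apply Hne, Hanti; auto.
  - intros x y. destruct (Req_dec x y) as [E | E]; [auto|].
    destruct (Htot x y); [left | right; right]; split; auto.
  - intros x y z [Hxy Nxy] [Hyz Nyz].
    destruct (Hleast (fun w => w = x \/ w = y \/ w = z)) as [m [Hm Hmin]]; [eauto|].
    assert (Hmx : le m x) by auto. assert (Hmy : le m y) by auto.
    destruct Hm as [-> | [-> | ->]].
    + split; [auto | intros ->; apply Nxy, Hanti; auto].
    + exfalso; apply Nxy, Hanti; auto.
    + exfalso; apply Nyz, Hanti; auto.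
Qed.

(* Under CH, cutting the well order at the first uncountable initial segment
   yields an order of type omega_1. *)
Lemma R_omega1_order (HCH : CH) : exists prec : R -> R -> Prop, well_founded prec /\
  (forall x y, prec x y \/ x = y \/ prec y x) /\
  (forall x y z, prec x y -> prec y z -> prec x z) /\
  (forall x, countable (fun y => prec y x)).
Proof.
  destruct R_well_order as [prec0 [Hwf [Htri Htr]]].
  destruct (classic (forall x, countable (fun y => prec0 y x))) as [Hc | Hc];
    [exists prec0; auto|].
  apply not_all_ex_not in Hc.
  destruct (wf_minimal prec0 _ Hwf Hc) as [x0 [Hx0 Hmin]].
  destruct (HCH (fun y => prec0 y x0)) as [|[h [Hh [Hinj _]]]]; [contradiction|].
  exists (fun a b => prec0 (h a) (h b)). split; [|split; [|split]].
  - exact (wf_inverse_image _ _ prec0 h Hwf).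
  - intros a b. destruct (Htri (h a) (h b)) as [H | [H | H]]; auto.
  - intros a b c; apply Htr.
  - intros b. destruct (NNPP _ (Hmin (h b) (Hh b))) as [f Hf].
    exists (fun a => f (h a)). intros a a' Ha Ha' E. apply Hinj, Hf; auto.
Qed.

Section Construction.
Variable I : (R -> Prop) -> Prop.
Hypothesis HI : standing_assumptions I.
Variable prec : R -> R -> Prop.
Hypothesis prec_wf : well_founded prec.
Hypothesis prec_trichotomy : forall x y, prec x y \/ x = y \/ prec y x.
Hypothesis prec_trans : forall x y z, prec x y -> prec y z -> prec x z.
Hypothesis prec_countable : forall x, countable (fun y => prec y x).
Variable n : nat.

(* Through [cantor_point], the reals index all Borel codes: [null_coded r] is the
   set coded by the preimage of [r] when that set is null, and empty otherwise. *)
Definition null_coded (r : R) : R -> Prop :=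
  fun z => exists t A, cantor_point t = r /\ codes t A /\ I A /\ A z.

Lemma null_coded_I (r : R) : I (null_coded r).
Proof.
  destruct (classic (exists t A, cantor_point t = r /\ codes t A /\ I A))
    as [[t [A [Ht [HA HIA]]]] | Hno].
  - apply (I_subset I HI _ A); [|exact HIA].
    intros z [t' [A' [Ht' [HA' [_ Hz]]]]].
    assert (t' = t) by (apply cantor_point_inj; congruence); subst t'.
    now rewrite (codes_functional _ _ _ HA HA').
  - apply (I_empty I HI). intros z [t [A [Ht [HA [HIA _]]]]]. apply Hno; eauto.
Qed.

Lemma null_coded_cover (A : R -> Prop) : I A -> exists r, subset A (null_coded r).
Proof.
  destruct HI as (_ & _ & _ & _ & Hborel & _).
  intros HA. destruct (Hborel A HA) as [B [HB [HIB HAB]]].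
  destruct (borel_coded B HB) as [t Ht].
  exists (cantor_point t). intros z Hz. exists t, B. auto.
Qed.

Definition null_below (x : R) : R -> Prop := fun z => exists r, prec r x /\ null_coded r z.

Lemma null_below_I (x : R) : I (null_below x).
Proof. apply (I_bigcup I HI); [apply prec_countable | intros r _; apply null_coded_I]. Qed.

Definition stage_set (g : R -> R) (P : R -> Prop) : R -> Prop :=
  fun v => exists w, P w /\ (v = g w \/ v = w - INR n * g w).

Lemma stage_set_mono (g : R -> R) (P Q : R -> Prop) :
  subset P Q -> subset (stage_set g P) (stage_set g Q).
Proof. intros HPQ v [w [Pw Hv]]. exists w; auto. Qed.

Lemma countable_stage_set (g : R -> R) (P : R -> Prop) :
  countable P -> countable (stage_set g P).
Proof.
  intros HP.
  apply (countable_subset _ (fun v => (exists w, P w /\ v = g w) \/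
                                      (exists w, P w /\ v = w - INR n * g w))).
  - intros v [w [Pw [-> | ->]]]; [left | right]; eauto.
  - apply countable_union; apply countable_image, HP.
Qed.

Definition bad (x : R) (A : R -> Prop) (y : R) : Prop :=
  exists p j k t, (1 <= j + k <= n)%nat /\ nsum p A t /\
    null_below x (INR j * y + INR k * (x - INR n * y) + t).

Lemma coefficient_neq0 (j k : nat) : (1 <= j + k <= n)%nat -> INR j - INR k * INR n <> 0.
Proof.
  intros Hjk E. apply (not_INR j (k * n)).
  - destruct k as [|k]; [lia | nia].
  - rewrite mult_INR. lra.
Qed.

Lemma bad_I (x : R) (A : R -> Prop) : countable A -> I (bad x A).
Proof.
  intros HA.
  assert (Hpiece : forall p j k, I (fun y => (1 <= j + k <= n)%nat /\
            exists t, nsum p A t /\ null_below x (INR j * y + INR k * (x - INR n * y) + t))).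
  { intros p j k.
    destruct (classic (1 <= j + k <= n)%nat) as [Hjk | Hjk];
      [|apply (I_empty I HI); tauto].
    apply (I_subset I HI _ (fun y => exists t, nsum p A t /\
             null_below x ((INR j - INR k * INR n) * y + (INR k * x + t)))).
    { intros y [_ [t [Ht Hy]]]. exists t. split; [exact Ht|].
      replace ((INR j - INR k * INR n) * y + (INR k * x + t))
        with (INR j * y + INR k * (x - INR n * y) + t) by ring. exact Hy. }
    apply (I_bigcup I HI); [now apply countable_nsum|].
    intros t _.
    apply (I_affine_preimage I HI); [now apply coefficient_neq0 | apply null_below_I]. }
  apply (I_subset I HI _ (fun y => exists p j k, (1 <= j + k <= n)%nat /\
            exists t, nsum p A t /\ null_below x (INR j * y + INR k * (x - INR n * y) + t))).
  - intros y [p [j [k [t [Hjk [Ht Hy]]]]]]. exists p, j, k. eauto.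
  - do 3 (apply (I_bigcup_nat I HI); intros ?). apply Hpiece.
Qed.

Lemma exists_not_bad (x : R) (A : R -> Prop) : countable A -> exists y, ~ bad x A y.
Proof.
  destruct HI as (_ & HR & _).
  intros HA. apply NNPP; intros Hno. apply HR.
  apply (I_subset I HI _ (bad x A)); [|now apply bad_I].
  intros y _. apply NNPP; intros Hy. apply Hno; eauto.
Qed.

Definition good_point (x : R) (A : R -> Prop) : R :=
  epsilon (inhabits 0) (fun y => ~ bad x A y).

Definition extend (x : R) (rec : forall w, prec w x -> R) (w : R) : R :=
  match excluded_middle_informative (prec w x) with
  | left h => rec w h
  | right _ => 0
  end.

Definition stage_point : R -> R :=
  Fix prec_wf (fun _ => R)
    (fun x rec => good_point x (stage_set (extend x rec) (fun w => prec w x))).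

Lemma stage_point_eq (x : R) :
  stage_point x = good_point x (stage_set stage_point (fun w => prec w x)).
Proof.
  unfold stage_point at 1. rewrite Fix_eq.
  - f_equal. apply functional_extensionality; intros v.
    apply propositional_extensionality; split; intros [w [Hw Hv]]; exists w;
      unfold extend in *; destruct excluded_middle_informative; tauto.
  - intros x' f g Hfg. replace g with f; [reflexivity|].
    apply functional_extensionality_dep; intros w.
    apply functional_extensionality_dep; intros h. apply Hfg.
Qed.

Lemma stage_point_not_bad (x : R) :
  ~ bad x (stage_set stage_point (fun w => prec w x)) (stage_point x).
Proof.
  rewrite stage_point_eq. apply (epsilon_spec (inhabits 0) (fun y => ~ bad x _ y)).
  apply exists_not_bad, countable_stage_set, prec_countable.
Qed.

Definition upto (x : R) : R -> Prop := fun w => prec w x \/ w = x.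

Lemma upto_join (x w : R) :
  exists z, (z = x \/ z = w) /\ subset (upto x) (upto z) /\ upto z w.
Proof.
  destruct (prec_trichotomy x w) as [H | [<- | H]].
  - exists w. split; [auto|]. split; [|now right].
    intros u [Hu | ->]; left; eauto.
  - exists x. split; [auto|]. split; [now intros u | now right].
  - exists x. split; [auto|]. split; [now intros u | now left].
Qed.

Lemma nsum_stage_set_max (g : R -> R) (P : R -> Prop) (m : nat) (s : R) :
  nsum m (stage_set g P) s ->
  m = O \/ exists x, P x /\ nsum m (stage_set g (upto x)) s.
Proof.
  revert s; induction m as [|m IH]; intros s Hs; [now left|]. right.
  destruct Hs as [s' [v [Hs' [[w [Pw Hv]] ->]]]].
  assert (Hx' : exists x', P x' /\ nsum m (stage_set g (upto x')) s').
  { destruct (IH s' Hs') as [-> | Hx']; [exists w; auto | exact Hx']. }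
  destruct Hx' as [x' [Px' Hs'x']].
  destruct (upto_join x' w) as [z [Hz [Hsub Hzw]]].
  exists z. split; [destruct Hz as [-> | ->]; assumption|].
  exists s', v. repeat split.
  - exact (nsum_mono _ _ m (stage_set_mono g _ _ Hsub) s' Hs'x').
  - exists w. auto.
Qed.

Lemma nsum_null_coded_stage (r : R) (m : nat) (x s : R) : (1 <= m <= n)%nat ->
  nsum m (stage_set stage_point (upto x)) s -> null_coded r s ->
  nsum m (stage_set stage_point (upto r)) s.
Proof.
  intros Hm. revert s.
  induction x as [x IH] using (well_founded_induction prec_wf). intros s Hs Hr.
  destruct (prec_trichotomy x r) as [Hxr | [<- | Hrx]]; [|exact Hs|].
  - refine (nsum_mono _ _ m (stage_set_mono stage_point _ _ _) s Hs).
    intros u [Hu | ->]; left; eauto.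
  - assert (Hsplit : nsum m (fun v => stage_set stage_point (fun w => prec w x) v \/
                                      v = stage_point x \/ v = x - INR n * stage_point x) s).
    { refine (nsum_mono _ _ m _ s Hs).
      intros v [w [[Hw | ->] Hv]]; [left; exists w; auto | right; tauto]. }
    destruct (nsum_split_pair _ _ _ _ _ Hsplit) as [Hbelow | [j [k [t [Hjk [Ht Es]]]]]].
    + destruct (nsum_stage_set_max _ _ _ _ Hbelow) as [-> | [x' [Hx' Hs']]]; [lia|].
      exact (IH x' Hx' s Hs' Hr).
    + exfalso. apply (stage_point_not_bad x). exists (m - j - k)%nat, j, k, t.
      split; [lia|]. split; [exact Ht|]. exists r. split; [exact Hrx|]. now rewrite <- Es.
Qed.

Lemma exists_sum_luzin_set : exists L : R -> Prop, (forall z, nsum (S n) L z) /\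
  forall m A, (1 <= m <= n)%nat -> I A -> countable (fun s => nsum m L s /\ A s).
Proof.
  exists (stage_set stage_point (fun _ => True)). split.
  - intros z. exists (INR n * stage_point z), (z - INR n * stage_point z). repeat split.
    + apply nsum_scale. exists z. auto.
    + exists z. auto.
    + ring.
  - intros m A Hm HA. destruct (null_coded_cover A HA) as [r Hr].
    apply (countable_subset _ (nsum m (stage_set stage_point (upto r)))).
    + intros s [Hs HAs].
      destruct (nsum_stage_set_max _ _ _ _ Hs) as [-> | [x [_ Hx]]]; [lia|].
      exact (nsum_null_coded_stage r m x s Hm Hx (Hr s HAs)).
    + apply countable_nsum, countable_stage_set, countable_union;
        [apply prec_countable | apply countable_singleton].
Qed.

End Construction.

Lemma luzin_of_uncountable (I : (R -> Prop) -> Prop) (S : R -> Prop) : CH ->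
  ~ countable S -> (forall A, I A -> countable (fun x => S x /\ A x)) -> luzin I S.
Proof. intros HCH HS HA. split; [destruct (HCH S); tauto | exact HA]. Qed.

Theorem mainTheorem15 (HCH : CH) (I : (R -> Prop) -> Prop)
  (HI : standing_assumptions I) (n : nat) (hn : (1 <= n)%nat) :
  exists L : R -> Prop,
    luzin I L /\ luzin I (nsum n L) /\ (forall z, nsum (S n) L z).
Proof.
  destruct (R_omega1_order HCH) as [prec [Hwf [Htri [Htr Hct]]]].
  destruct (exists_sum_luzin_set I HI prec Hwf Htri Htr Hct n) as [L [Hfull HL]].
  exists L.
  assert (HLunc : ~ countable (nsum n L)).
  { intros Hc. apply (R_uncountable I HI).
    apply (countable_subset _ (nsum (S n) L)); [intros z _; apply Hfull|].
    destruct (Hfull 0) as [a [l [_ [Hl _]]]].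
    destruct n as [|n']; [lia|].
    apply countable_minkowski; [exact Hc | exact (countable_of_countable_nsum L n' l Hl Hc)]. }
  split; [|split; [|exact Hfull]]; apply luzin_of_uncountable; try exact HCH.
  - intros Hc. apply HLunc, countable_nsum, Hc.
  - intros A HA. apply (countable_subset _ (fun s => nsum 1 L s /\ A s)).
    + intros x [Hx HAx]. split; [apply nsum_one, Hx | exact HAx].
    + apply HL; [lia | exact HA].
  - exact HLunc.
  - intros A HA. apply HL; [lia | exact HA].
Qed.
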